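(* Let $C$ be a cycle of goods with at most $8$ goods and let three agents have arbitrary utility functions on $C$. Then an mms-allocation of the goods of $C$ to the three agents exists.
   Context: A cycle of goods has goods $v_1,\dots,v_m$ as vertices and edges $v_iv_{i+1}$ ($1\le i<m$) and $v_mv_1$. A utility function assigns a non-negative real to each good, extended additively to sets. A bundle is a set of goods inducing a connected subgraph (empty allowed); an $n$-split is a sequence of $n$ pairwise disjoint bundles (possibly empty) with union all goods. $\mathrm{mms}^{(n)}(C,u)=\max_{P_1,\dots,P_n}\min_i u(P_i)$ over all $n$-splits. An allocation to agents $1,\dots,n$ with utilities $u_1,\dots,u_n$ is an $n$-split $P_1,\dots,P_n$ with $P_i$ given to agent $i$; it is an mms-allocation if $u_i(P_i)\ge\mathrm{mms}^{(n)}(C,u_i)$ for all $i$. *)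

(* Utilities take values in an arbitrary real field R
   (the paper: non-negative reals). *)
From HB Require Import structures.
From mathcomp Require Import all_boot all_order all_algebra.
Set Implicit Arguments. Unset Strict Implicit. Unset Printing Implicit Defensive.
Import Order.TTheory GRing.Theory Num.Theory.
Local Open Scope ring_scope.

(* The cycle of goods C_m: goods are 'I_m (v_1..v_m ~ 0..m-1), with edges
   {i, i+1 mod m}. *)
Definition cycle_adj (m : nat) (x y : 'I_m) : bool :=
  ((x.+1 %% m)%N == y) || ((y.+1 %% m)%N == x).

Definition connected_set (m : nat) (S : {set 'I_m}) : bool :=
  [forall x in S, forall y in S,
     connect [rel a b | [&& a \in S, b \in S & cycle_adj a b]] x y].

Definition is_split (m n : nat) (P : {ffun 'I_n -> {set 'I_m}}) : bool :=
  [&& [forall i, connected_set (P i)],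
      [forall i, forall j, (i != j) ==> [disjoint P i & P j]]
    & \bigcup_(i < n) P i == [set: 'I_m]].

Definition util (R : realFieldType) (m : nat) (u : 'I_m -> R) (S : {set 'I_m}) : R :=
  \sum_(g in S) u g.

(* The min uses u(all goods) as neutral element (an upper bound of every
   bundle value, so for n >= 1 this is the true minimum); the max uses 0 as
   neutral element (utilities are non-negative and an n-split exists). *)
Definition mms (R : realFieldType) (m n : nat) (u : 'I_m -> R) : R :=
  \big[Num.max/0]_(P : {ffun 'I_n -> {set 'I_m}} | is_split P)
     \big[Num.min/util u [set: 'I_m]]_(i < n) util u (P i).

(* Each agent's maximin share is attained by some 3-split, and since the values
   of the three bundles of a split add up to the value of all goods, every split
   contains a bundle that the agent values at least at its share.  The connected
   bundles of a cycle are its arcs, so for at most 8 goods there are finitely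
   many splits, and a computation checks the following certificate.  Give every
   agent an arbitrary split, standing for one of its mms-splits.  Either some
   split gives each agent a superset of a bundle of its own split, or there are
   an agent k and a split X such that, whichever bundle x of X agent k values
   at least at its share, some split gives k a superset of x and each other
   agent a superset of a bundle of its own split.  Acceptance of a bundle is
   upward closed, so the certificate yields an mms-allocation for arbitrary
   non-negative utilities. *)

From HB Require Import structures.
From mathcomp Require Import all_boot all_order all_algebra zify.
Import Order.TTheory GRing.Theory Num.Theory.
Set Implicit Arguments. Unset Strict Implicit. Unset Printing Implicit Defensive.

Lemma all2_nthE (S T : Type) (r : S -> T -> bool) x0 y0 s t :
  all2 r s t =
  (size s == size t) && all (fun i => r (nth x0 s i) (nth y0 t i)) (iota 0 (size s)).
Proof.
elim: s t => [|x s IH] [|y t] //=.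
by rewrite IH eqSS -add1n iotaDl all_map andbCA.
Qed.

Lemma count_sum (T : Type) (a : pred T) (s : seq T) : count a s = \sum_(v <- s) a v.
Proof. by rewrite -sum1_count big_mkcond. Qed.

(* [vm_compute] evaluates both arguments of [||] and [&&], so [has] and [all]
   never stop early; these variants do. *)
Fixpoint has_lazy (T : Type) (a : pred T) (s : seq T) : bool :=
  if s is x :: s' then (if a x then true else has_lazy a s') else false.

Fixpoint all_lazy (T : Type) (a : pred T) (s : seq T) : bool :=
  if s is x :: s' then (if a x then all_lazy a s' else false) else true.

Lemma has_lazyE T (a : pred T) s : has_lazy a s = has a s.
Proof. by elim: s => //= x s ->; case: (a x). Qed.

Lemma all_lazyE T (a : pred T) s : all_lazy a s = all a s.
Proof. by elim: s => //= x s ->; case: (a x). Qed.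

Section Certificate.
Variables (B : eqType) (b0 : B) (sub : rel B).

Definition dominates (L : seq B) (b : B) : bool := has_lazy (sub^~ b) L.

Definition fits (Ls : seq (seq B)) (p : seq B) : bool := all2 dominates Ls p.

Definition fits_head (L p : seq B) : bool := if p is b :: _ then dominates L b else false.

Definition fits_except (k : nat) (Ls : seq (seq B)) (p : seq B) : bool :=
  all_lazy (fun j => if j == k then true else dominates (nth [::] Ls j) (nth b0 p j))
    (iota 0 (size Ls)).

Definition rescue (S T : seq (seq B)) (Ls : seq (seq B)) : bool :=
  has_lazy (fun k => let Sk := [seq p <- S | fits_except k Ls p] in
    has_lazy (fun X => all_lazy (fun x => has_lazy (fun p => sub x (nth b0 p k)) Sk) X) T)
  (iota 0 (size Ls)).

(* The candidates in [S] are filtered one agent at a time, and the last agent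
   is searched for rather than filtered. *)
Fixpoint all_fit (U : seq (seq B)) (n : nat) (S : seq (seq B))
    (fallback : pred (seq (seq B))) : bool :=
  match n with
  | 0 => if has_lazy (@nilp B) S then true else fallback [::]
  | 1 => all_lazy (fun L => if has_lazy (fits [:: L]) S then true else fallback [:: L]) U
  | n'.+1 => all_lazy (fun L =>
      all_fit U n' [seq behead p | p <- S & fits_head L p] (fun Ls => fallback (L :: Ls))) U
  end.

Lemma all_fitSS U n S fallback : all_fit U n.+2 S fallback =
  all_lazy (fun L =>
    all_fit U n.+1 [seq behead p | p <- S & fits_head L p] (fun Ls => fallback (L :: Ls))) U.
Proof. by []. Qed.

Lemma has_fits_cons L Ls S :
  has (fits (L :: Ls)) S = has (fits Ls) [seq behead p | p <- S & fits_head L p].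
Proof. by elim: S => //= -[|b p] S -> //=; case: (dominates L b). Qed.

Lemma all_fitP U n S fallback : all_fit U n S fallback ->
  forall Ls, size Ls = n -> all (mem U) Ls -> has (fits Ls) S || fallback Ls.
Proof.
elim: n S fallback => [|[|n] IH] S fallback.
- move=> /= fit [|//] _ _; rewrite has_lazyE in fit.
  have -> : has (fits [::]) S = has (@nilp B) S by apply: eq_has => -[].
  by case: ifP fit.
- rewrite /= all_lazyE => /allP fit [//|L [|//]] _ /andP [LU _].
  by have := fit L LU; rewrite has_lazyE; case: ifP.
rewrite all_fitSS all_lazyE => /allP fit [|L Ls] //= [Ls_size] /andP [LU LsU].
by rewrite has_fits_cons; apply: (IH _ _ (fit L LU)).
Qed.

Variables (n : nat) (F : 'I_n -> pred B).
Hypothesis F_up : forall k a b, sub a b -> F k a -> F k b.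

Definition accepted (p : seq B) : bool := [forall k : 'I_n, F k (nth b0 p k)].

Lemma dominates_sound k L b : all (F k) L -> dominates L b -> F k b.
Proof.
by rewrite /dominates has_lazyE => /allP FL /hasP [a aL ab]; exact: F_up ab (FL a aL).
Qed.

Lemma fits_sound Ls p : size Ls = n -> (forall k, all (F k) (nth [::] Ls k)) ->
  fits Ls p -> accepted p.
Proof.
rewrite /fits (all2_nthE _ [::] b0) => Ls_size FLs /andP [_ /allP fit].
apply/forallP => k; apply: dominates_sound (FLs k) (fit k _).
by rewrite mem_iota Ls_size /=.
Qed.

Variables (S T : seq (seq B)).
Hypothesis T_accepted : forall k X, X \in T -> has (F k) X.

Lemma rescue_sound Ls : size Ls = n -> (forall k, all (F k) (nth [::] Ls k)) ->
  rescue S T Ls -> exists2 p, p \in S & accepted p.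
Proof.
rewrite /rescue has_lazyE => Ls_size FLs /hasP [k]; rewrite mem_iota Ls_size /= => k_lt.
rewrite has_lazyE => /hasP [X XT]; rewrite all_lazyE => /allP rescued.
have /hasP [x xX Fx] := T_accepted (Ordinal k_lt) XT.
have := rescued x xX; rewrite has_lazyE => /hasP [p].
rewrite mem_filter => /andP [p_except pS] xp.
exists p => //; apply/forallP => j; case: (eqVneq (j : nat) k) => [jk | jk].
  have -> : j = Ordinal k_lt by exact: ord_inj.
  exact: F_up xp Fx.
move: p_except; rewrite /fits_except all_lazyE => /allP /(_ j).
rewrite mem_iota Ls_size ltn_ord (negbTE jk) => /(_ isT).
exact: dominates_sound (FLs j).
Qed.

Lemma all_fit_sound U Ls : all_fit U n S (rescue S T) ->
  size Ls = n -> all (mem U) Ls -> (forall k, all (F k) (nth [::] Ls k)) ->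
  exists2 p, p \in S & accepted p.
Proof.
move=> fit Ls_size LsU FLs.
case/orP: (all_fitP fit Ls_size LsU) => [/hasP [p pS p_fits] |]; last exact: rescue_sound.
by exists p => //; exact: fits_sound p_fits.
Qed.
End Certificate.

Section CycleArcs.
Variable m : nat.

Definition adj_in (S : {set 'I_m}) : rel 'I_m :=
  [rel a b | [&& a \in S, b \in S & cycle_adj a b]].

Lemma adj_in_sym S : symmetric (adj_in S).
Proof. by move=> a b; rewrite /adj_in /= /cycle_adj orbC andbCA. Qed.

Lemma adj_ordS (S : {set 'I_m}) (x : 'I_m) : x \in S -> ordS x \in S -> adj_in S x (ordS x).
Proof. by move=> xS sxS; rewrite /adj_in /= xS sxS /cycle_adj eqxx. Qed.

(* [cpos s x] is [(x - s) mod m], written without [%%] so that [lia] applies. *)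
Definition cpos (s x : nat) : nat := if s <= x then x - s else m + x - s.

Definition cycle_arc (s l : nat) : {set 'I_m} := [set x : 'I_m | cpos s x < l].

Lemma cpos_self s : cpos s s = 0.
Proof. by rewrite /cpos leqnn subnn. Qed.

Lemma cpos_lt (s x : 'I_m) : cpos s x < m.
Proof. by rewrite /cpos; case: (leqP s x); have := ltn_ord x; lia. Qed.

Lemma cpos_inj (s : 'I_m) : injective (cpos s : 'I_m -> nat).
Proof.
move=> x y; rewrite /cpos; have := ltn_ord s; have := ltn_ord x; have := ltn_ord y.
by case: (leqP s x); case: (leqP s y) => ? ? ? ? ? /= E; apply: ord_inj; lia.
Qed.

Lemma cpos_ordS (s x : 'I_m) : ordS x != s -> cpos s (ordS x) = (cpos s x).+1.
Proof.
rewrite -val_eqE /cpos /=; have := ltn_ord x; have := ltn_ord s.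
case: (ltnP x.+1 m) => [x1_lt | x1_ge] ? ?.
  by rewrite modn_small //; case: (leqP s x); case: (leqP s x.+1); lia.
rewrite (_ : x.+1 = m) ?modnn; last lia.
by case: (leqP s x); case: (leqP s 0); lia.
Qed.

Lemma cpos_shift (y x : 'I_m) lo hi : lo <= hi < m ->
  (lo <= cpos y x <= hi) =
  (cpos (if y + lo < m then y + lo else y + lo - m) x < hi.+1 - lo).
Proof.
move=> /andP [? ?]; have := ltn_ord x; have := ltn_ord y; rewrite /cpos => ? ?.
case: (leqP y x) => ?; case: (ltnP (y + lo) m) => ? /=.
- by case: (leqP (y + lo) x) => ?; apply/idP/idP; lia.
- by case: (leqP (y + lo - m) x) => ?; apply/idP/idP; lia.
- by case: (leqP (y + lo) x) => ?; apply/idP/idP; lia.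
- by case: (leqP (y + lo - m) x) => ?; apply/idP/idP; lia.
Qed.

(* Every good of the arc is linked to its first good [s0] by stepping back. *)
Lemma arc_connected s l : s <= m -> connected_set (cycle_arc s l).
Proof.
have connected_from (s0 : 'I_m) : connected_set (cycle_arc s0 l).
  set S := cycle_arc s0 l.
  have to_s0 k (x : 'I_m) : cpos s0 x = k -> x \in S -> connect (adj_in S) x s0.
    elim: k x => [|k IH] x xk xS.
      by rewrite (@cpos_inj s0 x s0) ?cpos_self ?connect0.
    have x_pred : ordS (ord_pred x) = x by exact: ord_predK.
    have x_ne : ordS (ord_pred x) != s0.
      by rewrite x_pred; apply: contra_eq_neq xk => ->; rewrite cpos_self.
    have pk : cpos s0 (ord_pred x) = k by apply: succn_inj; rewrite -cpos_ordS // x_pred.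
    have pS : ord_pred x \in S by rewrite inE pk; move: xS; rewrite inE xk; exact: ltnW.
    apply: connect_trans (IH _ pk pS); apply: connect1.
    by rewrite adj_in_sym -{2}x_pred adj_ordS // x_pred.
  apply/forallP => x; apply/implyP => xS; apply/forallP => y; apply/implyP => yS.
  apply: connect_trans (to_s0 _ x erefl xS) _.
  by rewrite (sym_connect_sym (@adj_in_sym S)) (to_s0 _ y erefl yS).
case: (ltnP s m) => [s_lt _ | m_le s_le]; first exact: (connected_from (Ordinal s_lt)).
have -> : s = m by apply/eqP; rewrite eqn_leq s_le m_le.
case: (posnP m) => [m0 | m_gt0].
  by apply/forallP => x; have := ltn_ord x; rewrite {2}m0.
have -> : cycle_arc m l = cycle_arc (Ordinal m_gt0) l.
  by apply/setP => x; rewrite !inE /cpos /= (leqNgt m x) ltn_ord subn0 addKn.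
exact: connected_from.
Qed.

(* Removing the goods [y] and [z] cuts the cycle into two paths, and a
   connected set avoiding both lies on one of them. *)
Lemma connected_cut S (y z a b : 'I_m) : connected_set S ->
  y \notin S -> z \notin S -> a \in S -> b \in S ->
  (cpos y a < cpos y z) = (cpos y b < cpos y z).
Proof.
move=> S_conn yS zS aS bS.
have step (x : 'I_m) : x \in S -> ordS x \in S ->
    (cpos y (ordS x) < cpos y z) = (cpos y x < cpos y z).
  move=> xS sxS; have sx_y : ordS x != y by apply: contraNneq yS => <-.
  have sx_z : (cpos y x).+1 != cpos y z.
    by apply: contraNneq zS => E; rewrite -(@cpos_inj y (ordS x) z) // cpos_ordS.
  by rewrite cpos_ordS // [in RHS]leq_eqVlt (negbTE sx_z).
have S_closed : closed (adj_in S) (fun x : 'I_m => cpos y x < cpos y z).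
  move=> u v /and3P [uS vS /orP [/eqP uv | /eqP vu]]; rewrite /in_mem /=.
    have suv : ordS u = v by exact: ord_inj.
    by rewrite -suv in vS *; rewrite step.
  have svu : ordS v = u by exact: ord_inj.
  by rewrite -svu in uS *; rewrite step.
have := S_conn => /forallP /(_ a) /implyP /(_ aS) /forallP /(_ b) /implyP /(_ bS).
exact: (closed_connect S_closed).
Qed.

Lemma connected_arc S : connected_set S ->
  exists s l, [/\ s <= m, l <= m & S = cycle_arc s l].
Proof.
move=> S_conn.
have [y yS | S_full] := pickP (fun y => y \notin S); last first.
  exists 0, m; split => //; apply/setP => x.
  by rewrite !inE /cpos /= subn0 ltn_ord; apply/negbFE/S_full.
have [a aS | S_empty] := pickP (mem S); last first.
  by exists 0, 0; split => //; apply/setP => x; rewrite !inE ltn0 [LHS]S_empty.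
case: (arg_minnP (fun x : 'I_m => cpos y x) aS) => xl xlS xl_min.
case: (arg_maxnP (fun x : 'I_m => cpos y x) aS) => xh xhS xh_max.
have S_interval x : (x \in S) = (cpos y xl <= cpos y x <= cpos y xh).
  apply/idP/idP => [xS | /andP [lo_x x_hi]]; first by rewrite (xl_min x xS); exact: xh_max.
  apply: contraT => xS; have := connected_cut S_conn yS xS xlS xhS.
  have xl_ne : cpos y xl != cpos y x by apply: contraNneq xS => /cpos_inj <-.
  have xh_ne : cpos y x != cpos y xh by apply: contraNneq xS => /cpos_inj ->.
  rewrite [LHS]ltn_neqAle xl_ne lo_x => /esym.
  by rewrite ltnNge ltnW // ltn_neqAle xh_ne.
have lo_hi : cpos y xl <= cpos y xh < m by rewrite cpos_lt xl_min.
exists (if y + cpos y xl < m then y + cpos y xl else y + cpos y xl - m).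
exists ((cpos y xh).+1 - cpos y xl).
split; [by have := ltn_ord y; case: ifP => /=; lia | by lia |].
by apply/setP => x; rewrite inE -cpos_shift // S_interval.
Qed.

Lemma connected_setT : connected_set [set: 'I_m].
Proof.
have := @arc_connected 0 m (leq0n m); congr connected_set.
by apply/setP => x; rewrite !inE /cpos subn0 ltn_ord.
Qed.

Lemma connected_set0 : connected_set (set0 : {set 'I_m}).
Proof. by apply/forallP => x; rewrite inE. Qed.
End CycleArcs.

(* Bundles are handled as bit vectors, so that the certificate can be checked
   by [vm_compute]. *)
Definition bits_sub : rel (seq bool) := all2 implb.

Section BitVectors.
Variable m : nat.

Definition set_of (v : seq bool) : {set 'I_m} := [set x : 'I_m | nth false v x].

Definition bits (S : {set 'I_m}) : seq bool := [seq x \in S | x <- enum 'I_m].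

Lemma size_bits S : size (bits S) = m.
Proof. by rewrite size_map size_enum_ord. Qed.

Lemma nth_bits S (x : 'I_m) : nth false (bits S) x = (x \in S).
Proof. by rewrite (nth_map x) ?size_enum_ord // nth_ord_enum. Qed.

Lemma set_of_bits S : set_of (bits S) = S.
Proof. by apply/setP => x; rewrite inE nth_bits. Qed.

Lemma set_of_sub v w : bits_sub v w -> set_of v \subset set_of w.
Proof.
rewrite /bits_sub (all2_nthE _ false false) => /andP [_ /allP vw].
apply/subsetP => x; rewrite !inE => vx.
have x_lt : x < size v by rewrite ltnNge; apply: contraTN vx => /(nth_default false) ->.
by have := vw (x : nat); rewrite mem_iota x_lt vx => /(_ isT).
Qed.

Definition arc_bits (s l : nat) : seq bool := mkseq (fun x => cpos m s x < l) m.

Lemma arc_bitsE s l : arc_bits s l = bits (cycle_arc m s l).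
Proof.
apply: (@eq_from_nth _ false); rewrite size_mkseq ?size_bits // => i i_lt.
by rewrite nth_mkseq // (nth_bits _ (Ordinal i_lt)) inE.
Qed.

Definition bundles : seq (seq bool) :=
  undup [seq arc_bits s l | s <- iota 0 m.+1, l <- iota 0 m.+1].

Lemma bundlesP v : reflect (exists2 S, connected_set S & v = bits S) (v \in bundles).
Proof.
rewrite mem_undup; apply: (iffP allpairsP) => [[[s l] [s_in _ ->]] | [S S_conn ->]].
  rewrite mem_iota ltnS in s_in.
  by exists (cycle_arc m s l); [exact: arc_connected | exact: arc_bitsE].
have [s [l [s_le l_le ->]]] := connected_arc S_conn.
by exists (s, l); rewrite !mem_iota /= !ltnS s_le l_le arc_bitsE.
Qed.

Lemma size_bundle v : v \in bundles -> size v = m.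
Proof. by case/bundlesP => S _ ->; rewrite size_bits. Qed.

Lemma connected_bundle v : v \in bundles -> connected_set (set_of v).
Proof. by case/bundlesP => S S_conn ->; rewrite set_of_bits. Qed.
End BitVectors.

Section PartitionEnumeration.
Variables (m : nat) (A : seq (seq bool)).
Hypothesis A_size : {in A, forall v, size v = m}.

Definition bits_remove (r a : seq bool) : seq bool :=
  mkseq (fun i => nth false r i && ~~ nth false a i) m.

Definition covers (p : seq (seq bool)) (r : seq bool) : bool :=
  all (fun i => count (fun v => nth false v i) p == nth false r i) (iota 0 m).

Fixpoint splits_rec (k : nat) (r : seq bool) : seq (seq (seq bool)) :=
  if k is k'.+1 then
    [seq a :: p | a <- [seq a <- A | bits_sub a r], p <- splits_rec k' (bits_remove r a)]
  else if covers [::] r then [:: [::]] else [::].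

Lemma covers_cons a p r : size a = m -> size r = m ->
  covers (a :: p) r = bits_sub a r && covers p (bits_remove r a).
Proof.
move=> a_size r_size.
rewrite /covers /bits_sub (all2_nthE _ false false) a_size r_size eqxx -all_predI.
apply: eq_in_all => i; rewrite mem_iota /= => i_lt; rewrite nth_mkseq //.
by case: (nth false a i); case: (nth false r i); rewrite /= ?add0n ?add1n ?eqSS.
Qed.

Lemma mem_splits_rec k r p : size r = m ->
  (p \in splits_rec k r) = [&& size p == k, all (mem A) p & covers p r].
Proof.
elim: k r p => [|k IH] r p r_size /=.
  by case: p => [|a p]; case: ifP; rewrite ?inE.
apply/allpairsPdep/idP => [[a [q [aA q_in ->]]] |].
  move: aA; rewrite mem_filter => /andP [a_r aA].
  rewrite IH ?size_mkseq // in q_in; case/and3P: q_in => q_size q_A q_cov.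
  by rewrite /= eqSS q_size aA q_A covers_cons ?(A_size aA) // a_r.
case: p => [|a q] //= /and3P [q_size /andP [aA q_A]].
rewrite covers_cons ?(A_size aA) // => /andP [a_r q_cov].
exists a, q; rewrite mem_filter a_r aA IH ?size_mkseq //.
by rewrite -eqSS q_size q_A q_cov.
Qed.
End PartitionEnumeration.

Section CycleSplits.
Variable m : nat.

Lemma is_splitE n (P : {ffun 'I_n -> {set 'I_m}}) :
  is_split P =
  [forall k, connected_set (P k)] && [forall x, \sum_(k < n) (x \in P k) == 1].
Proof.
rewrite /is_split; congr andb.
apply/andP/forallP => [[/forallP disj /eqP cover] x | one].
  have : x \in \bigcup_(k < n) P k by rewrite cover inE.
  case/bigcupP => k _ xk; rewrite (bigD1 k) //= xk big1 // => j jk.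
  by have /forallP/(_ k) := disj j; rewrite jk => /disjointFl ->.
split.
  apply/forallP => i; apply/forallP => j; apply/implyP => ij.
  rewrite disjoint_subset; apply/subsetP => x xi; rewrite inE; apply/negP => xj.
  have := one x; rewrite (bigD1 i) // (bigD1 j) /=; last by rewrite eq_sym.
  by rewrite xi xj.
apply/eqP/setP => x; rewrite inE; apply/bigcupP.
have [k xk | none] := pickP (fun k => x \in P k); first by exists k.
by have := one x; rewrite big1 // => k _; rewrite none.
Qed.

Lemma exists_split n : 0 < n -> exists P : {ffun 'I_n -> {set 'I_m}}, is_split P.
Proof.
move=> n_gt0; exists [ffun k : 'I_n => if val k == 0 then [set: 'I_m] else set0].
rewrite is_splitE; apply/andP; split.
  apply/forallP => k; rewrite ffunE.
  by case: ifP => _; [exact: connected_setT | exact: connected_set0].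
apply/forallP => x; rewrite (bigD1 (Ordinal n_gt0)) //= ffunE eqxx inE big1 // => k k0.
rewrite ffunE ifF ?inE //; apply: contraNF k0 => /eqP k0.
by apply/eqP/ord_inj.
Qed.

Definition splits n : seq (seq (seq bool)) := splits_rec m (bundles m) n (nseq m true).

Definition split_of n (p : seq (seq bool)) : {ffun 'I_n -> {set 'I_m}} :=
  [ffun k : 'I_n => set_of m (nth [::] p k)].

Lemma mem_splits n p : (p \in splits n) =
  [&& size p == n, all (mem (bundles m)) p
    & [forall x : 'I_m, count (fun v => nth false v x) p == 1]].
Proof.
rewrite mem_splits_rec ?size_nseq //; last exact: size_bundle.
congr [&& _, _ & _]; apply/allP/forallP => [cov x | cov i].
  by have := cov x; rewrite mem_iota ltn_ord nth_nseq ltn_ord => /(_ isT).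
by rewrite mem_iota /= => i_lt; have := cov (Ordinal i_lt); rewrite nth_nseq i_lt.
Qed.

Lemma split_of_is_split n p : p \in splits n -> is_split (split_of n p).
Proof.
rewrite mem_splits => /and3P [/eqP p_size p_bundles /forallP p_cov].
rewrite is_splitE; apply/andP; split.
  apply/forallP => k; rewrite ffunE.
  by apply/connected_bundle/(allP p_bundles)/mem_nth; rewrite p_size.
apply/forallP => x; have := p_cov x; rewrite count_sum (big_nth [::]) p_size big_mkord.
suff -> : \sum_(k < n) (x \in split_of n p k) = \sum_(k < n) nth false (nth [::] p k) x.
  by [].
by apply: eq_bigr => k _; rewrite ffunE inE.
Qed.

Lemma bits_of_split n (P : {ffun 'I_n -> {set 'I_m}}) :
  is_split P -> [seq bits (P k) | k <- enum 'I_n] \in splits n.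
Proof.
rewrite is_splitE mem_splits size_map size_enum_ord eqxx.
move=> /andP [/forallP P_conn /forallP one] /=; apply/andP; split.
  by apply/allP => v /mapP [k _ ->]; apply/bundlesP; exists (P k).
apply/forallP => x; rewrite count_sum big_map big_enum /=.
by under eq_bigr do rewrite nth_bits; exact: one.
Qed.

Definition index_le (A : seq (seq bool)) : rel (seq bool) :=
  fun a b => index a A <= index b A.

(* One representative of each split up to the order of its bundles. *)
Definition sorted_splits n : seq (seq (seq bool)) :=
  let A := bundles m in [seq p <- splits n | sorted (index_le A) p].

Lemma sorted_splits_perm n p : p \in splits n ->
  exists2 q, q \in sorted_splits n & perm_eq q p.
Proof.
move=> p_split; have q_perm := permEl (perm_sort (index_le (bundles m)) p).
exists (sort (index_le (bundles m)) p) => //.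
rewrite mem_filter sort_sorted; last by move=> a b; exact: leq_total.
move: p_split; rewrite !mem_splits (perm_size q_perm) (perm_all _ q_perm).
by congr [&& _, _ & _]; apply: eq_forallb => x; rewrite (permP q_perm).
Qed.
End CycleSplits.

Section MaximinShare.
Local Open Scope ring_scope.
Variables (R : realFieldType) (m n : nat) (u : 'I_m -> R).
Hypothesis u_ge0 : forall g, 0 <= u g.

Lemma util_ge0 S : 0 <= util u S.
Proof. by apply: sumr_ge0 => g _; exact: u_ge0. Qed.

Lemma util_subset (S T : {set 'I_m}) : S \subset T -> util u S <= util u T.
Proof.
move=> /subsetP ST; rewrite /util [leLHS]big_mkcond [leRHS]big_mkcond /=.
apply: ler_sum => g _; case: ifP => [/ST -> // | _].
by case: ifP => _; [exact: u_ge0 | exact: lexx].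
Qed.

Lemma sum_util_split (P : {ffun 'I_n -> {set 'I_m}}) : is_split P ->
  \sum_(k < n) util u (P k) = util u [set: 'I_m].
Proof.
rewrite is_splitE => /andP [_ /forallP one]; rewrite /util.
under eq_bigr do rewrite big_mkcond /=.
rewrite exchange_big [RHS]big_mkcond /=; apply: eq_bigr => g _.
under eq_bigr do rewrite -mulrb.
by rewrite sumrMnr (eqP (one g)) inE.
Qed.

Lemma mms_mulrn_le : mms n u *+ n <= util u [set: 'I_m].
Proof.
rewrite /mms; elim/big_ind: _ => [| x y | P P_split].
- by rewrite mul0rn util_ge0.
- by rewrite maxEle; case: ifP.
rewrite -[leRHS](sum_util_split P_split) -[n in _ *+ n]subn0 -sumr_const_nat big_mkord.
by apply: ler_sum => k _; exact: bigmin_le.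
Qed.

Lemma mms_le_some_bundle (P : {ffun 'I_n -> {set 'I_m}}) : (0 < n)%N -> is_split P ->
  exists k, mms n u <= util u (P k).
Proof.
move=> n_gt0 P_split; apply/existsP; apply: contraT => /existsPn P_lt.
suff : util u [set: 'I_m] < mms n u *+ n by rewrite ltNge mms_mulrn_le.
rewrite -[ltLHS](sum_util_split P_split) -[n in _ *+ n]subn0 -sumr_const_nat big_mkord.
apply: ltr_sum => [|k _]; last by rewrite ltNge P_lt.
by apply/hasP; exists (Ordinal n_gt0); rewrite ?mem_index_enum.
Qed.

Lemma exists_mms_split (P0 : {ffun 'I_n -> {set 'I_m}}) : is_split P0 ->
  exists2 P : {ffun 'I_n -> {set 'I_m}}, is_split P & forall k, mms n u <= util u (P k).
Proof.
move=> P0_split; rewrite /mms; elim/big_ind: _ => [| x y | P P_split].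
- by exists P0 => // k; exact: util_ge0.
- by rewrite maxEle; case: ifP.
by exists P => // k; exact: bigmin_le.
Qed.
End MaximinShare.

Definition certificate m n : bool :=
  all_fit bits_sub (sorted_splits m n) n (splits m n)
    (rescue [::] bits_sub (splits m n) (sorted_splits m n)).

Lemma mms_allocation_of_certificate m n : 0 < n -> certificate m n ->
  forall (R : realFieldType) (u : 'I_n -> 'I_m -> R), (forall i g, (0 <= u i g)%R) ->
  exists P : {ffun 'I_n -> {set 'I_m}},
    is_split P /\ forall i, (mms n (u i) <= util (u i) (P i))%R.
Proof.
move=> n_gt0 cert R u u_ge0.
pose F i v := (mms n (u i) <= util (u i) (set_of m v))%R.
have F_up i v w : bits_sub v w -> F i v -> F i w.
  by move=> vw Fv; apply: le_trans Fv (util_subset (u_ge0 i) (set_of_sub m vw)).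
have U_accepted i X : X \in sorted_splits m n -> has (F i) X.
  rewrite mem_filter => /andP [_ X_split].
  have [k Fk] := mms_le_some_bundle (u_ge0 i) n_gt0 (split_of_is_split X_split).
  apply/hasP; exists (nth [::] X k); last by move: Fk; rewrite ffunE.
  by apply: mem_nth; move: X_split; rewrite mem_splits => /and3P [/eqP -> _ _].
have U_mms i : has (all (F i)) (sorted_splits m n).
  have [P0 P0_split] := exists_split m n_gt0.
  have [P P_split P_mms] := exists_mms_split (u_ge0 i) P0_split.
  have [L LU L_perm] := sorted_splits_perm (bits_of_split P_split).
  apply/hasP; exists L; rewrite // (perm_all _ L_perm).
  by apply/allP => v /mapP [k _ ->]; rewrite /F set_of_bits.
pose Ls := [seq nth [::] (sorted_splits m n) (find (all (F i)) (sorted_splits m n))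
           | i <- enum 'I_n].
have Ls_size : size Ls = n by rewrite size_map size_enum_ord.
have Ls_U : all (mem (sorted_splits m n)) Ls.
  by apply/allP => L /mapP [i _ ->]; apply: mem_nth; rewrite -has_find.
have Ls_F i : all (F i) (nth [::] Ls i).
  by rewrite (nth_map i) ?size_enum_ord // nth_ord_enum; exact: nth_find.
have [p p_split /forallP p_acc] := all_fit_sound F_up U_accepted cert Ls_size Ls_U Ls_F.
exists (split_of m n p); split => [|i]; first exact: split_of_is_split.
by rewrite ffunE; exact: p_acc.
Qed.

Lemma certificate3_upto8 : all (certificate ^~ 3) (iota 0 9).
Proof. by vm_compute. Qed.

Local Open Scope ring_scope.

Theorem theorem2p4 (R : realFieldType) (m : nat) (Hm : (m <= 8)%N)
    (u : 'I_3 -> 'I_m -> R) (Hu : forall i g, 0 <= u i g) :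
  exists P : {ffun 'I_3 -> {set 'I_m}},
    is_split P /\ forall i : 'I_3, mms 3 (u i) <= util (u i) (P i).
Proof.
apply: mms_allocation_of_certificate Hu => //.
by apply: (allP certificate3_upto8); rewrite mem_iota.
Qed.
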